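(* Let $1\le s\le n-1$ and ${\bf v}^s=(\frac1s,\dots,\frac1s,0,\dots,0)$ (with $s$ prizes equal to $1/s$). If $s<n/2$, then $M({\bf v}^s,\theta)$ and hence the equilibrium effort $x^*({\bf v}^s,\theta)$ are decreasing in $\theta\in[0,1]$; if $s>n/2$, they are increasing in $\theta\in[0,1]$.
   Context: Fix an integer $n\ge 2$ and a noise distribution with cdf $F$ and density $f$ on $\mathbb R$ (integrals finite). For $r=1,\dots,n$ let $g_r(u)=u^{n-r}(1-u)^{r-1}$ and $\beta_r=\binom{n-1}{r-1}\int g_r'(F(t))f(t)^2dt$; $B_r=\sum_{k=1}^r\beta_k$, which for $1\le r\le n-1$ equals $r\binom{n-1}{r}\int F(t)^{n-1-r}[1-F(t)]^{r-1}f(t)^2dt>0$. For prize vectors ${\bf v}$ ($v_1\ge\dots\ge v_n\ge0$, $\sum v_r=1$) let $R({\bf v})=\sum_r\beta_rv_r$, $L({\bf v})=-\frac1n\sum_{r=1}^n\sum_{s<r}(\beta_r+\beta_s)(v_s-v_r)$, $M({\bf v},\theta)=R({\bf v})+\theta L({\bf v})$, $\theta\in[0,1]$. The effort cost $c$ is strictly increasing, differentiable and strictly convex on $[0,\bar x]$, $\bar x=c^{-1}(1)$, with $c(0)=c'(0)=0$; the symmetric equilibrium effort $x^*({\bf v},\theta)$ solves $c'(x^* )=M({\bf v},\theta)$. *)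

From HB Require Import structures.
From mathcomp Require Import all_boot all_order all_algebra.
From mathcomp Require Import all_classical all_reals all_analysis.
Set Implicit Arguments. Unset Strict Implicit. Unset Printing Implicit Defensive.
Import Order.TTheory GRing.Theory Num.Theory.
Import numFieldNormedType.Exports.
Local Open Scope classical_set_scope.
Local Open Scope ring_scope.

Section Contest.
Variable R : realType.

(* g_r(u) = u^(n-r) (1-u)^(r-1), as a polynomial; ranks r are 1-based nats *)
Definition gpoly (n r : nat) : {poly R} := 'X^(n - r) * (1 - 'X) ^+ r.-1.

Definition beta (F f : R -> R) (n r : nat) : R :=
  'C(n.-1, r.-1)%:R *
  Rintegral (@lebesgue_measure R) setT
    (fun t => (gpoly n r)^`().[F t] * f t ^+ 2).

(* prize vectors are functions of the rank r = 1..n *)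
Definition Rev (F f : R -> R) (n : nat) (v : nat -> R) : R :=
  \sum_(1 <= r < n.+1) beta F f n r * v r.

Definition Lev (F f : R -> R) (n : nat) (v : nat -> R) : R :=
  - (n%:R)^-1 * \sum_(1 <= r < n.+1) \sum_(1 <= s < r)
      (beta F f n r + beta F f n s) * (v s - v r).

Definition Mev (F f : R -> R) (n : nat) (v : nat -> R) (theta : R) : R :=
  Rev F f n v + theta * Lev F f n v.

Definition vsprize (s : nat) (r : nat) : R :=
  if (r <= s)%N then (s%:R)^-1 else 0.

End Contest.

From HB Require Import structures.
From mathcomp Require Import all_boot all_order all_algebra.
From mathcomp Require Import all_classical all_reals all_analysis.
Import Order.TTheory GRing.Theory Num.Theory.
Import numFieldNormedType.Exports.
Local Open Scope classical_set_scope.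
Local Open Scope ring_scope.

From mathcomp Require Import ring lra zify measurable_realfun.
Set Implicit Arguments. Unset Strict Implicit. Unset Printing Implicit Defensive.

(* Write B_r = beta_1 + ... + beta_r.  The polynomials
   sum_(k <= r) C(n-1, k-1) g_k' telescope to r C(n-1, r) u^(n-1-r) (1-u)^(r-1)
   for r < n and vanish for r = n, so B_n = 0 while
   B_r = r C(n-1, r) \int F^(n-1-r) (1-F)^(r-1) f^2 > 0 for 0 < r < n: between
   the 1/4- and 3/4-quantiles of F the integrand is bounded below by f^2 times a
   positive constant, and f^2 has positive integral there because f has mass 1/2
   there.  Using B_n = 0, the double sum defining L collapses on the prize
   vector v^s to L(v^s) = -(n - 2s)/(ns) B_s, so M(v^s, theta) is affine in theta
   with slope of the sign of 2s - n.  Finally c' is nondecreasing on [0, xbar]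
   by convexity, so the equilibrium condition c'(x*(theta)) = M(v^s, theta)
   transports strict monotonicity from M to x*. *)

Section BetaPolynomial.
Variable R : realType.

Definition Bpoly (n r : nat) : {poly R} :=
  \sum_(1 <= k < r.+1) 'C(n.-1, k.-1)%:R *: (gpoly R n k)^`().

Let scaler_nat_mulr m (p : {poly R}) : m%:R *: p = p * m%:R.
Proof. by rewrite scaler_nat mulr_natr. Qed.

Lemma BpolyS n r : Bpoly n r.+1 = Bpoly n r + 'C(n.-1, r)%:R *: (gpoly R n r.+1)^`().
Proof. by rewrite /Bpoly big_nat_recr. Qed.

Lemma deriv_XnM1subXn (a b : nat) : ('X^(a.+1) * (1 - 'X) ^+ b.+1 : {poly R})^`() =
  'X^a * (1 - 'X) ^+ b * ((a.+1)%:R * (1 - 'X) - (b.+1)%:R * 'X).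
Proof.
rewrite derivM derivXn deriv_exp derivB derivC derivX !succnK.
by rewrite -[_ *+ a.+1]mulr_natr -[_ *+ b.+1]mulr_natr !exprS; ring.
Qed.

Lemma Bpoly_closed j k : Bpoly (j + k).+2 k.+1 =
  ((j + k).+1 * 'C(j + k, k))%:R *: ('X^j * (1 - 'X) ^+ k).
Proof.
elim: k j => [|k IH] j.
  rewrite /Bpoly big_nat1 /gpoly addn0 bin0 muln1 expr0 !mulr1 scale1r.
  by rewrite subn1 derivXn scaler_nat.
rewrite /Bpoly big_nat_recr // -/(Bpoly _ _).
have -> : (j + k.+1).+2 = (j.+1 + k).+2 by rewrite addSnnS.
rewrite IH /gpoly.
have -> : ((j.+1 + k).+2 - k.+2 = j.+1)%N by lia.
rewrite deriv_XnM1subXn !succnK.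
have E1 : (k.+1 * 'C((j.+1 + k).+1, k.+1) = (j.+1 + k).+1 * 'C(j.+1 + k, k))%N.
  by rewrite -mul_bin_diag.
have E2 : (j.+1 * 'C((j.+1 + k).+1, k.+1) = (j.+1 + k).+1 * 'C(j.+1 + k, k.+1))%N.
  by rewrite mul_bin_down; congr (_ * _)%N; lia.
rewrite -E1 -addSnnS -E2 !scaler_nat_mulr !natrM !exprS -[LHS]/(_ + _).
ring.
Qed.

Lemma Bpoly_diag n : Bpoly n n = 0.
Proof.
case: n => [|[|N]]; first by rewrite /Bpoly big_geq.
  by rewrite /Bpoly big_nat1 /gpoly !expr0 mulr1 -polyC1 derivC scaler0.
rewrite /Bpoly big_nat_recr // -/(Bpoly _ _).
have := Bpoly_closed 0 N; rewrite add0n => ->.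
rewrite /gpoly subnn !succnK binn !expr0 !mul1r muln1 binn.
rewrite deriv_exp derivB derivC derivX scale1r scaler_nat_mulr -[_ *+ N.+1]mulr_natr -[LHS]/(_ + _).
ring.
Qed.

Lemma bernstein_ge0 (a b : nat) (u : R) : 0 <= u <= 1 -> 0 <= u ^+ a * (1 - u) ^+ b.
Proof. by case/andP=> u0 u1; rewrite mulr_ge0 ?exprn_ge0 ?subr_ge0. Qed.

Lemma bernstein_ge (a b : nat) (u : R) : 1/4 <= u <= 3/4 ->
  (1/4) ^+ (a + b) <= u ^+ a * (1 - u) ^+ b.
Proof.
case/andP=> u_lo u_hi; rewrite exprD.
by apply: ler_pM; rewrite ?exprn_ge0 //; apply: lerXn2r; rewrite ?nnegrE //; lra.
Qed.
End BetaPolynomial.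

Section PairSum.
Variable R : realType.
Variables (b : nat -> R) (n s : nat).
Hypotheses (s_gt0 : (0 < s)%N) (s_lt_n : (s < n)%N).
Local Notation B := (\sum_(1 <= k < s.+1) b k).

Lemma vsprize_pair_sum_lo r : (r <= s)%N ->
  \sum_(1 <= q < r) (b r + b q) * (vsprize R s q - vsprize R s r) = 0.
Proof.
move=> rs; rewrite big_nat_cond big1 // => q /andP[/andP[_ qr] _].
by rewrite /vsprize !ifT ?subrr ?mulr0 //; lia.
Qed.

Lemma vsprize_pair_sum_hi r : (s < r)%N ->
  \sum_(1 <= q < r) (b r + b q) * (vsprize R s q - vsprize R s r) = b r + B / s%:R.
Proof.
move=> sr; rewrite (big_cat_nat _ (n := s.+1)) //= -[LHS]/(_ + _).
rewrite [X in _ + X]big_nat_cond [X in _ + X]big1 ?addr0; last first.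
  by move=> q /andP[/andP[sq qr] _]; rewrite /vsprize !ifF ?subrr ?mulr0 //; lia.
rewrite big_nat_cond (eq_bigr (fun q => (b r + b q) / s%:R)); last first.
  by move=> q /andP[/andP[q1 qs] _]; rewrite /vsprize ifT ?ifF ?subr0 //; lia.
rewrite -big_nat_cond -mulr_suml big_split /= sumr_const_nat subSS subn0 mulrDl.
by rewrite -[b r *+ s]mulr_natr mulfK // pnatr_eq0 -lt0n.
Qed.

Lemma vsprize_pair_sum : \sum_(1 <= k < n.+1) b k = 0 ->
  - (n%:R)^-1 * \sum_(1 <= r < n.+1) \sum_(1 <= q < r)
      (b r + b q) * (vsprize R s q - vsprize R s r)
  = - ((n%:R - 2 * s%:R) / (n%:R * s%:R)) * B.
Proof.
have ns : (s.+1 <= n.+1)%N by exact: ltnW.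
move=> sum0; have tail : \sum_(s.+1 <= k < n.+1) b k = - B.
  by apply/eqP; rewrite -addr_eq0 addrC -big_cat_nat //= sum0.
rewrite (big_cat_nat _ (n := s.+1)) //= big_nat_cond big1 ?add0r; last first.
  by move=> r /andP[/andP[_ rs] _]; exact: vsprize_pair_sum_lo.
rewrite (eq_big_nat _ _ (fun r rn => vsprize_pair_sum_hi (proj1 (andP rn)))).
rewrite big_split /= tail sumr_const_nat subSS -[_ *+ (n - s)]mulr_natr natrB; last exact: ltnW.
have s0 : s%:R != 0 :> R by rewrite pnatr_eq0 -lt0n.
have n0 : n%:R != 0 :> R by rewrite pnatr_eq0 -lt0n (ltn_trans s_gt0).
field; exact/andP.
Qed.
End PairSum.

Section ConvexDerivative.
Variable R : realType.
Implicit Types (c : R -> R) (x y z : R).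

Lemma derive1_quotient_cvg c y : derivable c y 1 ->
  (fun h => h^-1 * (c (h + y) - c y)) @ 0^' --> derive1 c y.
Proof.
move=> dc; rewrite /derive1.
suff -> : (fun h => h^-1 * (c (h + y) - c y)) =
          (fun h => h^-1 *: ((c \o shift y) (h *: 1) - c y)) by exact: dc.
by apply/funext => h /=; rewrite [h *: 1]mulr1.
Qed.

Lemma convex_chord_le c y x z :
  (forall t, 0 < t < 1 -> c (t * y + (1 - t) * x) <= t * c y + (1 - t) * c x) ->
  y < z < x -> c z <= c y + (z - y) / (x - y) * (c x - c y).
Proof.
move=> cvx /andP[yz zx]; have xy0 : x - y != 0 by rewrite subr_eq0 gt_eqF ?(lt_trans yz).
have t01 : 0 < (x - z) / (x - y) < 1.
  rewrite divr_gt0 ?subr_gt0 ?(lt_trans yz) //= ltr_pdivrMr ?subr_gt0 ?(lt_trans yz) //.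
  by rewrite mul1r ltrD2l ltrN2.
have := cvx _ t01.
have -> : (x - z) / (x - y) * y + (1 - (x - z) / (x - y)) * x = z by field.
by congr (_ <= _); field.
Qed.

Lemma derive1_le_of_convex c y x : y < x ->
  derivable c y 1 -> derivable c x 1 ->
  (forall t, 0 < t < 1 -> c (t * y + (1 - t) * x) <= t * c y + (1 - t) * c x) ->
  derive1 c y <= derive1 c x.
Proof.
move=> yx dy dx cvx; have xy0 : 0 < x - y by rewrite subr_gt0.
set m := (c x - c y) / (x - y).
have dyR := cvg_dnbhs_at_right (derive1_quotient_cvg dy).
have dxL := cvg_dnbhs_at_left (derive1_quotient_cvg dx).
apply: (@le_trans _ _ m).
  rewrite -(cvg_lim _ dyR) //; apply: limr_le; first by apply/cvg_ex; exists (derive1 c y).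
  near=> h; have h0 : 0 < h by near: h; exact: nbhs_right_gt.
  have hxy : h < x - y by near: h; exact: nbhs_right_lt.
  have /(convex_chord_le cvx) : y < h + y < x by apply/andP; split; lra.
  have -> : c y + (h + y - y) / (x - y) * (c x - c y) = c y + h * m.
    by rewrite /m; field; rewrite gt_eqF.
  by rewrite ler_pdivrMl // lerBlDl.
rewrite -(cvg_lim _ dxL) //; apply: limr_ge; first by apply/cvg_ex; exists (derive1 c x).
near=> h; have h0 : h < 0 by near: h; exact: nbhs_left_lt.
have hxy : - (x - y) < h by near: h; apply: nbhs_left_gt; rewrite oppr_lt0.
have /(convex_chord_le cvx) : y < h + x < x by apply/andP; split; lra.
have -> : c y + (h + x - y) / (x - y) * (c x - c y) = c x + h * m by rewrite /m; field; rewrite gt_eqF.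
by rewrite ler_ndivlMl // lerBlDl.
Unshelve. all: by end_near.
Qed.

Lemma lt_of_derive1_lt c a b x y :
  (forall z, a <= z -> z <= b -> derivable c z 1) ->
  (forall z w t, a <= z -> z < w -> w <= b -> 0 < t -> t < 1 ->
     c (t * z + (1 - t) * w) <= t * c z + (1 - t) * c w) ->
  a <= x <= b -> a <= y <= b -> derive1 c x < derive1 c y -> x < y.
Proof.
move=> dc cvx /andP[ax xb] /andP[ay yb] c'xy; rewrite ltNge le_eqVlt.
apply/negP => /orP[/eqP yx|yx]; first by move: c'xy; rewrite yx ltxx.
suff : derive1 c y <= derive1 c x by rewrite leNgt c'xy.
apply: (derive1_le_of_convex yx (dc _ ay yb) (dc _ ax xb)) => t /andP[t0 t1].
exact: cvx ay yx xb t0 t1.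
Qed.
End ConvexDerivative.

Section NoiseDistribution.
Variable R : realType.
Local Notation mu := (@lebesgue_measure R).
Variables (F f : R -> R).
Hypothesis f_ge0 : forall t, 0 <= f t.
Hypothesis f_integrable : mu.-integrable setT (fun t => (f t)%:E).
Hypothesis f_mass1 : Rintegral mu setT f = 1.
Hypothesis F_cdf : forall t, F t = Rintegral mu `]-oo, t] f.

Let f_integrable_on (A : set R) : measurable A -> mu.-integrable A (EFin \o f).
Proof. by move=> mA; apply: integrableS f_integrable. Qed.

Let Rintegral_f_ge0 (A : set R) : 0 <= Rintegral mu A f.
Proof. by apply: Rintegral_ge0 => x _; exact: f_ge0. Qed.

Lemma cdfB a b : a <= b -> F b - F a = Rintegral mu `]a, b] f.
Proof. by move=> ab; rewrite !F_cdf; apply: Rintegral_itvB => //; exact: f_integrable_on. Qed.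

Lemma cdfC a : 1 - F a = Rintegral mu `]a, +oo[ f.
Proof.
rewrite F_cdf -f_mass1 -set_itvNyy.
by apply: Rintegral_itvB => //; exact: f_integrable_on.
Qed.

Lemma cdf_ge0 t : 0 <= F t.
Proof. by rewrite F_cdf; exact: Rintegral_f_ge0. Qed.

Lemma cdf_le1 t : F t <= 1.
Proof. by rewrite -subr_ge0 cdfC; exact: Rintegral_f_ge0. Qed.

Lemma cdf_nondecreasing a b : a <= b -> F a <= F b.
Proof. by move=> ab; rewrite -subr_ge0 cdfB //; exact: Rintegral_f_ge0. Qed.

Lemma cdf_continuous : continuous F.
Proof.
move=> t; apply/cvgrPdist_lt => e e0.
have [d [d0 small]] := integral_normr_continuous f_integrable e0.
have near_lt : forall a b, a <= b -> b - a < d -> F b - F a < e.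
  move=> a b ab bad; rewrite cdfB //.
  have -> : Rintegral mu `]a, b] f = Rintegral mu `]a, b] (fun y => `|f y|).
    by apply: eq_Rintegral => y _; rewrite ger0_norm.
  apply: small => //.
  suff : (mu [set` Interval (BRight a) (BRight b)] < d%:E)%E by [].
  rewrite lebesgue_measure_itv /=.
  by case: ifPn => _; rewrite -?EFinB lte_fin.
exists d => //= x; rewrite /ball /= => xtd.
have [tx|xt] := leP t x.
  rewrite distrC ger0_norm ?subr_ge0 ?cdf_nondecreasing //.
  by rewrite distrC ger0_norm ?subr_ge0 // in xtd; exact: near_lt.
rewrite !ger0_norm ?subr_ge0 ?cdf_nondecreasing ?ltW // in xtd *.
exact: near_lt (ltW xt) xtd.
Qed.

Lemma exists_mass_gt (S : nat -> set (measurableTypeR R)) a : a < 1 ->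
  {homo S : k l / (k <= l)%N >-> (k <= l)%O} ->
  (forall k, measurable (S k)) -> \bigcup_k S k = setT ->
  exists k, a < Rintegral mu (S k) f.
Proof.
move=> a1 nd mS cover.
have := @ge0_nondecreasing_set_cvg_integral _ (measurableTypeR R) _ S
  (fun t => (f t)%:E) mu nd mS
  (fun k => measurable_funS measurableT (subsetT _) (measurable_int _ f_integrable))
  (fun k x _ => f_ge0 x : (0 <= (f x)%:E)%E).
rewrite cover -[X in _ --> X]fineK ?(integrable_fin_num measurableT f_integrable) //.
rewrite -/(Rintegral _ _ _) f_mass1 => mass_cvg.
apply: contrapT => none.
suff : (1%:E <= a%:E)%E by rewrite lee_fin leNgt a1.
rewrite -(cvg_lim _ mass_cvg) //; apply: lime_le; first by apply/cvg_ex; eexists; exact: mass_cvg.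
near=> k; rewrite -(fineK (integrable_fin_num (mS k) (f_integrable_on (mS k)))) lee_fin.
by rewrite leNgt; apply/negP => ak; apply: none; exists k.
Unshelve. all: by end_near.
Qed.

Lemma cdf_gt_exists a : a < 1 -> exists t, a < F t.
Proof.
move=> a1; have [k ak] : exists k : nat, a < Rintegral mu `]-oo, k%:R] f.
  apply: (@exists_mass_gt (fun k : nat => `]-oo, k%:R]%classic)) => //.
  - by move=> k l kl; apply/subsetPset; apply: subset_itvl; rewrite bnd_simp ler_nat.
  - apply/seteqP; split => // x _ /=; exists (Num.trunc `|x|).+1 => //=.
    by rewrite in_itv /= ltW // (le_lt_trans (ler_norm x) (truncnS_gt _)).
by exists k%:R; rewrite F_cdf.
Qed.

Lemma cdf_lt_exists a : 0 < a -> exists t, F t < a.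
Proof.
move=> a0; have [k ak] : exists k : nat, 1 - a < Rintegral mu `]-(k%:R), +oo[ f.
  apply: (@exists_mass_gt (fun k : nat => `]-(k%:R), +oo[%classic)); first by lra.
  - by move=> k l kl; apply/subsetPset; apply: subset_itvr; rewrite bnd_simp lerN2 ler_nat.
  - by [].
  - apply/seteqP; split => // x _ /=; exists (Num.trunc `|x|).+1 => //=.
    rewrite in_itv /= andbT ltrNl (le_lt_trans _ (truncnS_gt _)) //.
    by rewrite -normrN ler_norm.
by exists (- k%:R); move: ak; rewrite -cdfC; lra.
Qed.

Lemma cdf_quantiles a b : 0 < a -> a < b -> b < 1 ->
  exists u w, [/\ u < w, F u = a & F w = b].
Proof.
move=> a0 ab b1.
have [t0 Ft0] := cdf_lt_exists a0; have [t1 Ft1] := cdf_gt_exists b1.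
have t01 : t0 <= t1.
  by rewrite leNgt; apply/negP => /ltW/cdf_nondecreasing; lra.
have Fc : {within `[t0, t1], continuous F} by apply: continuous_subspaceT; exact: cdf_continuous.
have [u _ Fu] : exists2 u, u \in `[t0, t1] & F u = a.
  by apply: IVT => //; rewrite ge_min le_max; apply/andP; split; apply/orP; [left|right]; lra.
have [w _ Fw] : exists2 w, w \in `[t0, t1] & F w = b.
  by apply: IVT => //; rewrite ge_min le_max; apply/andP; split; apply/orP; [left|right]; lra.
exists u, w; split => //.
by rewrite ltNge; apply/negP => /cdf_nondecreasing; lra.
Qed.

Lemma integral_sqr_gt0 (A : set (measurableTypeR R)) (m : R) :
  measurable A -> mu A = m%:E -> 0 < Rintegral mu A f ->
  (0 < \int[mu]_(x in A) (f x ^+ 2)%:E)%E.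
Proof.
move=> mA muA If0.
have mf : measurable_fun A f.
  by apply/measurable_EFinP; exact: measurable_funS (measurable_int _ f_integrable).
have mf2 : measurable_fun A (fun x => (f x ^+ 2)%:E).
  by apply/measurable_EFinP; exact: measurable_funX.
have m0 : 0 <= m by rewrite -lee_fin -muA.
rewrite lt_neqAle integral_ge0 ?andbT; last by move=> x _; rewrite lee_fin sqr_ge0.
apply/negP => /eqP sqr0.
pose eps := Rintegral mu A f / (2 * (m + 1)).
have eps0 : 0 < eps by rewrite divr_gt0 // mulr_gt0 //; lra.
have k0 : 0 <= (4 * eps)^-1 by rewrite invr_ge0 mulr_ge0 // ltW.
(* AM-GM: [f <= eps + f^2 / (4 eps)] *)
have : (\int[mu]_(x in A) (f x)%:E <=
        \int[mu]_(x in A) (eps%:E + ((4 * eps)^-1)%:E * (f x ^+ 2)%:E))%E.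
  apply: ge0_le_integral => //.
  - by move=> x _; rewrite lee_fin.
  - exact/measurable_EFinP.
  - by apply: emeasurable_funD => //; exact: emeasurable_funM.
  - move=> x _; rewrite -EFinM -EFinD lee_fin -subr_ge0.
    have -> : eps + (4 * eps)^-1 * f x ^+ 2 - f x = (f x - 2 * eps) ^+ 2 / (4 * eps).
      by field; rewrite gt_eqF.
    by rewrite divr_ge0 ?sqr_ge0 // mulr_ge0 // ltW.
rewrite ge0_integralD //; last 3 first.
- by move=> x _; rewrite lee_fin ltW.
- by move=> x _; rewrite -EFinM lee_fin mulr_ge0 ?sqr_ge0.
- exact: emeasurable_funM.
rewrite integral_cst // ge0_integralZl_EFin //; last by move=> x _; rewrite lee_fin sqr_ge0.
rewrite -sqr0 mule0 adde0 (_ : (eps%:E * _ = eps%:E * m%:E)%E); last by congr (_ * _)%E.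
rewrite -(fineK (integrable_fin_num mA (f_integrable_on mA))) -/(Rintegral _ _ _).
rewrite -EFinM lee_fin /eps mulrAC -mulrA leNgt gtr_pMr // ltr_pdivrMr; last lra.
by move/negP; apply; lra.
Qed.

Lemma Rintegral_cdf_gt0 (P : R -> R) (k : R) : 0 < k ->
  (forall u, 0 <= u <= 1 -> 0 <= P u) ->
  (forall u, 1/4 <= u <= 3/4 -> k <= P u) ->
  mu.-integrable setT (fun t => (P (F t) * f t ^+ 2)%:E) ->
  0 < Rintegral mu setT (fun t => P (F t) * f t ^+ 2).
Proof.
move=> k0 P_ge0 P_ge_k Pint.
have [u [w [uw Fu Fw]]] : exists u w, [/\ u < w, F u = 1/4 & F w = 3/4].
  by apply: cdf_quantiles; lra.
set I := `]u, w]%classic : set (measurableTypeR R).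
have mI : measurable I by exact: measurable_itv.
have muI : mu I = (w - u)%:E.
  by rewrite /I lebesgue_measure_itv /= lte_fin uw -EFinB.
have If : 0 < Rintegral mu I f by rewrite -cdfB ?ltW // Fu Fw; lra.
have X0 := integral_sqr_gt0 mI muI If.
have mG : measurable_fun setT (fun t => (P (F t) * f t ^+ 2)%:E) by case/integrableP : Pint.
have mf2 : measurable_fun I (fun x => (f x ^+ 2)%:E).
  apply/measurable_EFinP; apply: measurable_funX.
  by apply/measurable_EFinP; exact: measurable_funS (measurable_int _ f_integrable).
have le_int : (k%:E * \int[mu]_(x in I) (f x ^+ 2)%:E <=
               \int[mu]_x (P (F x) * f x ^+ 2)%:E)%E.
  apply: le_trans (ge0_subset_integral mu mI measurableT mG _ _) => //; last first.
    by move=> x _; rewrite lee_fin mulr_ge0 ?sqr_ge0 // P_ge0 // cdf_ge0 cdf_le1.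
  rewrite -(ge0_integralZl_EFin mu mI _ mf2 (ltW k0)); last by move=> x _; rewrite lee_fin sqr_ge0.
  apply: ge0_le_integral => //.
  - by move=> x _; rewrite -EFinM lee_fin mulr_ge0 ?sqr_ge0 ?ltW.
  - exact: emeasurable_funM.
  - exact: measurable_funS mG.
  - move=> x; rewrite /I /= in_itv /= => /andP[ux xw].
    rewrite -EFinM lee_fin ler_wpM2r ?sqr_ge0 // P_ge_k //.
    by rewrite -Fu -Fw !cdf_nondecreasing // ltW.
apply: fine_gt0; apply/andP; split; first by apply: lt_le_trans le_int; rewrite mule_gt0 ?lte_fin.
by rewrite ltey; have := integrable_fin_num measurableT Pint; rewrite fin_numE => /andP[_].
Qed.

Variable n : nat.
Hypothesis beta_integrable : forall r, (1 <= r <= n)%N ->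
  mu.-integrable setT (fun t => ((gpoly R n r)^`().[F t] * f t ^+ 2)%:E).

Lemma Bpoly_integrable s : (s <= n)%N ->
  mu.-integrable setT (fun t => ((Bpoly R n s).[F t] * f t ^+ 2)%:E).
Proof.
elim: s => [|s IH] sn.
  apply: (eq_integrable _ _ _ _ (integrable0 mu setT)) => // t _.
  by rewrite /Bpoly big_geq // horner0 mul0r.
have := integrableD measurableT (IH (ltnW sn))
  (integrableZl measurableT 'C(n.-1, s)%:R (beta_integrable (sn : (1 <= s.+1 <= n)%N))).
apply: eq_integrable => // t _ /=.
by rewrite BpolyS hornerD hornerZ -EFinM -EFinD; congr (_%:E); ring.
Qed.

Lemma sum_beta_Rintegral s : (s <= n)%N ->
  \sum_(1 <= k < s.+1) beta F f n k =
  Rintegral mu setT (fun t => (Bpoly R n s).[F t] * f t ^+ 2).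
Proof.
elim: s => [|s IH] sn.
  rewrite big_geq // (@eq_Rintegral _ _ _ _ _ (fun _ => 0)) ?Rintegral_cst ?mul0r //.
  by move=> t _; rewrite /Bpoly big_geq // horner0 mul0r.
have beta_s := beta_integrable (sn : (0 < s.+1 <= n)%N).
rewrite big_nat_recr //= IH ?(ltnW sn) // /beta -RintegralZl //.
rewrite -RintegralD //; [|exact: Bpoly_integrable (ltnW sn)|exact: integrableZl beta_s].
by apply: eq_Rintegral => t _; rewrite BpolyS hornerD hornerZ; ring.
Qed.

Lemma sum_beta_full : \sum_(1 <= k < n.+1) beta F f n k = 0.
Proof.
rewrite sum_beta_Rintegral // Bpoly_diag (@eq_Rintegral _ _ _ _ _ (fun _ => 0)).
  by rewrite Rintegral_cst // mul0r.
by move=> t _; rewrite horner0 mul0r.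
Qed.

Lemma sum_beta_gt0 s : (0 < s < n)%N -> 0 < \sum_(1 <= k < s.+1) beta F f n k.
Proof.
case/andP=> s0 sn; rewrite sum_beta_Rintegral ?(ltnW sn) //.
have [j [k [n_jk s_k]]] : exists j k, n = (j + k).+2 /\ s = k.+1.
  by exists (n - s.+1)%N, s.-1; lia.
have Bint := Bpoly_integrable (ltnW sn).
rewrite n_jk s_k Bpoly_closed in Bint *.
set C := ((j + k).+1 * 'C(j + k, k))%:R.
have C0 : 0 < C by rewrite ltr0n muln_gt0 bin_gt0 leq_addl.
have horner_Bpoly u : (C *: ('X^j * (1 - 'X) ^+ k)).[u] = C * (u ^+ j * (1 - u) ^+ k).
  by rewrite hornerZ hornerM hornerXn horner_exp hornerD hornerN hornerX hornerC.
have Ck0 : 0 < C * (1/4) ^+ (j + k) by rewrite mulr_gt0 // exprn_gt0.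
apply: (Rintegral_cdf_gt0 Ck0) => //.
- by move=> u u01; rewrite horner_Bpoly mulr_ge0 ?(ltW C0) ?bernstein_ge0.
- by move=> u u_mid; rewrite horner_Bpoly ler_wpM2l ?(ltW C0) ?bernstein_ge.
Qed.

Lemma Lev_vsprize s : (0 < s < n)%N -> Lev F f n (vsprize R s) =
  - ((n%:R - 2 * s%:R) / (n%:R * s%:R)) * \sum_(1 <= k < s.+1) beta F f n k.
Proof. by case/andP=> s0 sn; rewrite /Lev vsprize_pair_sum // sum_beta_full. Qed.
End NoiseDistribution.

Theorem corollary1 (R : realType) (n s : nat) (F f c : R -> R) (xbar : R)
    (xstar : R -> R)
  (hn : (2 <= n)%N) (hs1 : (1 <= s)%N) (hs2 : (s <= n.-1)%N)
  (hf0 : forall t, 0 <= f t)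
  (hfint : (@lebesgue_measure R).-integrable setT (fun t => (f t)%:E))
  (hf1 : Rintegral (@lebesgue_measure R) setT f = 1)
  (hF : forall t, F t = Rintegral (@lebesgue_measure R) `]-oo, t] f)
  (hbeta : forall r, (1 <= r <= n)%N ->
     (@lebesgue_measure R).-integrable setT
       (fun t => ((gpoly R n r)^`().[F t] * f t ^+ 2)%:E))
  (hxbar0 : 0 <= xbar) (hcxbar : c xbar = 1)
  (hcinc : forall x y, 0 <= x -> x < y -> y <= xbar -> c x < c y)
  (hcder : forall x, 0 <= x -> x <= xbar -> derivable c x 1)
  (hcconv : forall x y t, 0 <= x -> x < y -> y <= xbar -> 0 < t -> t < 1 ->
     c (t * x + (1 - t) * y) < t * c x + (1 - t) * c y)
  (hc0 : c 0 = 0) (hc'0 : derive1 c 0 = 0)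
  (* xstar theta = x^*(v^s, theta): the symmetric equilibrium effort, c'(xstar) = M(v^s, theta) *)
  (hxstar : forall theta, 0 <= theta <= 1 ->
     0 <= xstar theta <= xbar /\
     derive1 c (xstar theta) = Mev F f n (vsprize R s) theta) :
  ((s.*2 < n)%N ->
     forall th1 th2, 0 <= th1 -> th1 < th2 -> th2 <= 1 ->
       Mev F f n (vsprize R s) th2 < Mev F f n (vsprize R s) th1 /\
       xstar th2 < xstar th1) /\
  ((n < s.*2)%N ->
     forall th1 th2, 0 <= th1 -> th1 < th2 -> th2 <= 1 ->
       Mev F f n (vsprize R s) th1 < Mev F f n (vsprize R s) th2 /\
       xstar th1 < xstar th2).
Proof.
have sn : (0 < s < n)%N by apply/andP; split; lia.
set M := Mev F f n (vsprize R s).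
set B := \sum_(1 <= k < s.+1) beta F f n k.
have B0 : 0 < B := sum_beta_gt0 hf0 hfint hf1 hF hbeta sn.
have ns0 : 0 < n%:R * s%:R :> R by rewrite -natrM ltr0n muln_gt0; lia.
have slope th1 th2 : M th2 - M th1 =
    - ((th2 - th1) * ((n%:R - 2 * s%:R) / (n%:R * s%:R)) * B).
  by rewrite /M /Mev (Lev_vsprize hbeta sn) -/B; ring.
have effort th1 th2 : 0 <= th1 <= 1 -> 0 <= th2 <= 1 -> M th1 < M th2 ->
    xstar th1 < xstar th2.
  move=> /hxstar[x1 d1] /hxstar[x2 d2]; rewrite /M -d1 -d2.
  apply: (lt_of_derive1_lt hcder _ x1 x2) => x y t x0 xy yb t0 t1.
  exact/ltW/hcconv.
split=> ns th1 th2 th1_0 th12 th2_1.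
  have lt_M : M th2 < M th1.
    rewrite -subr_lt0 slope oppr_lt0 !mulr_gt0 ?subr_gt0 ?invr_gt0 //.
    by rewrite -natrM ltr_nat mul2n.
  by split=> //; apply: effort => //; apply/andP; split; lra.
have lt_M : M th1 < M th2.
  rewrite -subr_gt0 slope oppr_gt0 pmulr_llt0 // pmulr_rlt0 ?subr_gt0 //.
  by rewrite pmulr_llt0 ?invr_gt0 // subr_lt0 -natrM ltr_nat mul2n.
by split=> //; apply: effort => //; apply/andP; split; lra.
Qed.
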